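(* For every integer $n\ge0$, $$B^{(c)}_{n,\lambda}(x,y)=\sum_{m=0}^{n}\sum_{k=0}^{m}\sum_{l=0}^{\lfloor k/2\rfloor}\binom{n}{m}\binom{k}{2l}(-1)^l\lambda^{n-k}S_1(m,k)\,b_{n-m}\,B_{k-2l}(x)\,y^{2l}.$$ Furthermore, for every integer $n\ge1$, $$B^{(s)}_{n,\lambda}(x,y)=\sum_{m=0}^{n}\sum_{k=0}^{m}\sum_{l=0}^{\lfloor (k-1)/2\rfloor}\binom{n}{m}\binom{k}{2l+1}(-1)^l\lambda^{n-k}S_1(m,k)\,b_{n-m}\,B_{k-2l-1}(x)\,y^{2l+1},$$ where an inner sum with upper limit $-1$ is empty.
   Context: Let $\lambda$ be a nonzero real number; generating functions are formal power series in $t$. $e_\lambda^{x}(t)=(1+\lambda t)^{x/\lambda}$, $\cos_\lambda^{(y)}(t)=\cos\!\big(\tfrac{y}{\lambda}\log(1+\lambda t)\big)$, $\sin_\lambda^{(y)}(t)=\sin\!\big(\tfrac{y}{\lambda}\log(1+\lambda t)\big)$. The type 2 degenerate cosine-Bernoulli and sine-Bernoulli polynomials are defined by $\frac{t}{e_\lambda^{1/2}(t)-e_\lambda^{-1/2}(t)}e_\lambda^{x}(t)\cos_\lambda^{(y)}(t)=\sum_{n\ge0}B^{(c)}_{n,\lambda}(x,y)\frac{t^n}{n!}$ and the same with $\sin_\lambda^{(y)}(t)$ giving $B^{(s)}_{n,\lambda}(x,y)$. The (non-degenerate) type 2 Bernoulli polynomials are defined by $\frac{t}{e^{t/2}-e^{-t/2}}e^{xt}=\sum_{n\ge0}B_n(x)\frac{t^n}{n!}$.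 The Bernoulli numbers of the second kind $b_n$ are defined by $\frac{t}{\log(1+t)}=\sum_{n\ge0}b_n\frac{t^n}{n!}$. $S_1(n,k)$ are the signed Stirling numbers of the first kind, $\frac{1}{k!}(\log(1+t))^k=\sum_{n\ge k}S_1(n,k)\frac{t^n}{n!}$. *)

(* Formal power series in t over a real field R are
   represented by their coefficient sequences  nat -> R  (coefficient of t^n). *)
From HB Require Import structures.
From mathcomp Require Import all_boot all_order all_algebra.
Set Implicit Arguments. Unset Strict Implicit. Unset Printing Implicit Defensive.
Import Order.TTheory GRing.Theory Num.Theory.
Local Open Scope ring_scope.

Section FPS.
Variable R : realFieldType.
Definition fps := nat -> R.

Definition fps_one : fps := fun n => (n == 0%N)%:R.
Definition fps_scale (c : R) (f : fps) : fps := fun n => c * f n.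
Definition fps_sub (f g : fps) : fps := fun n => f n - g n.
Definition fps_mul (f g : fps) : fps :=
  fun n => \sum_(i < n.+1) f i * g (n - i)%N.
Definition fps_pow (f : fps) (k : nat) : fps := iter k (fps_mul f) fps_one.
(* composition a(L(t)) of the series a with a series L with L(0) = 0 *)
Definition fps_comp (a L : fps) : fps :=
  fun n => \sum_(k < n.+1) a k * fps_pow L k n.
(* f(t)/t, for f with f(0) = 0 *)
Definition fps_divt (f : fps) : fps := fun n => f n.+1.
(* multiplicative inverse of a series with nonzero constant term:
   g 0 = 1/f 0,  g (n+1) = -(1/f 0) * sum_{i=0}^{n} f (i+1) g (n-i) *)
Fixpoint fps_inv_aux (f : fps) (n : nat) : seq R :=
  match n with
  | 0 => [:: (f 0%N)^-1]
  | n'.+1 => let s := fps_inv_aux f n' in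
      rcons s (- (f 0%N)^-1 * \sum_(i < n'.+1) f i.+1 * nth 0 s (n' - i)%N)
  end.
Definition fps_inv (f : fps) : fps := fun n => nth 0 (fps_inv_aux f n) n.

Definition exp_coef : fps := fun k => (k`!%:R)^-1.
Definition cos_coef : fps :=
  fun k => if odd k then 0 else (-1) ^+ k./2 / k`!%:R.
Definition sin_coef : fps :=
  fun k => if odd k then (-1) ^+ k./2 / k`!%:R else 0.

(* log(1 + lam t) *)
Definition log1p (lam : R) : fps :=
  fun n => if n is n'.+1 then (-1) ^+ n' * lam ^+ n / n%:R else 0.

(* degenerate exponential e_lam^x(t) = (1+lam t)^{x/lam} = exp((x/lam) log(1+lam t)) *)
Definition dexp (lam x : R) : fps := fps_comp exp_coef (fps_scale (x / lam) (log1p lam)).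
Definition dcos (lam y : R) : fps := fps_comp cos_coef (fps_scale (y / lam) (log1p lam)).
Definition dsin (lam y : R) : fps := fps_comp sin_coef (fps_scale (y / lam) (log1p lam)).

(* t / (e_lam^{1/2}(t) - e_lam^{-1/2}(t)) *)
Definition dfactor (lam : R) : fps :=
  fps_inv (fps_divt (fps_sub (dexp lam (2^-1)) (dexp lam (- 2^-1)))).

Definition Bc (lam x y : R) (n : nat) : R :=
  n`!%:R * fps_mul (fps_mul (dfactor lam) (dexp lam x)) (dcos lam y) n.
Definition Bs (lam x y : R) (n : nat) : R :=
  n`!%:R * fps_mul (fps_mul (dfactor lam) (dexp lam x)) (dsin lam y) n.

Definition oexp (a : R) : fps := fun n => a ^+ n / n`!%:R.
(* type 2 Bernoulli polynomials: t/(e^{t/2}-e^{-t/2}) e^{xt} *)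
Definition B2 (n : nat) (x : R) : R :=
  n`!%:R * fps_mul (fps_inv (fps_divt (fps_sub (oexp (2^-1)) (oexp (- 2^-1))))) (oexp x) n.
(* Bernoulli numbers of the second kind: t / log(1+t) *)
Definition bsec (n : nat) : R := n`!%:R * fps_inv (fps_divt (log1p 1)) n.
(* signed Stirling numbers of the first kind: (log(1+t))^k / k! *)
Definition S1 (n k : nat) : R := n`!%:R * fps_pow (log1p 1) k n / k`!%:R.
End FPS.

From HB Require Import structures.
From mathcomp Require Import all_boot all_order all_algebra.
From mathcomp Require Import ring lra zify.
From Stdlib Require Import FunctionalExtensionality.
Set Implicit Arguments. Unset Strict Implicit. Unset Printing Implicit Defensive.
Import Order.TTheory GRing.Theory Num.Theory.
Local Open Scope ring_scope.

(* Put u = log(1 + lam t) / lam.  Then e_lam^x(t) = e^(x u),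
   cos_lam^(y)(t) = cos(y u), and t / (e_lam^(1/2)(t) - e_lam^(-1/2)(t))
   = W(lam t) E(u), where W(t) = t / log(1 + t) generates the b_n and
   E(s) = s / (e^(s/2) - e^(-s/2)).  So the generating function of the
   cosine polynomials is W(lam t) G(u) with G(s) = E(s) e^(x s) cos(y s),
   whose coefficients are binomial convolutions of B2_j(x) with those of
   cos(y s).  Expanding u^k / k! through S1 and multiplying by W(lam t)
   gives the formula; the sine case is identical with odd indices. *)

(* Truncated congruences of polynomials over a commutative ring.  They let us
   prove identities between power series coefficientwise by passing to
   polynomial truncations, where {poly R} already provides the ring laws. *)
Section Valuation.
Variable R : comNzRingType.
Implicit Types (p q r : {poly R}) (N : nat).

Definition vanish_below N p := forall n, (n < N)%N -> p`_n = 0.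

Definition congX N p q := vanish_below N (p - q).

Lemma vanish_belowW a b p : (b <= a)%N -> vanish_below a p -> vanish_below b p.
Proof. by move=> hb h n hn; apply: h; exact: leq_trans hn hb. Qed.

Lemma vanish_belowD N p q :
  vanish_below N p -> vanish_below N q -> vanish_below N (p + q).
Proof. by move=> hp hq n hn; rewrite coefD hp ?hq ?addr0. Qed.

Lemma vanish_belowM a b p q :
  vanish_below a p -> vanish_below b q -> vanish_below (a + b) (p * q).
Proof.
move=> hp hq n hn; rewrite coefM big1 // => -[i /= hi] _.
have [hia|hai] := ltnP i a; first by rewrite hp ?mul0r.
by rewrite hq ?mulr0 //; lia.
Qed.

Lemma vanish_below_sum N (I : finType) (F : I -> {poly R}) :
  (forall i, vanish_below N (F i)) -> vanish_below N (\sum_i F i).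
Proof. by move=> h n hn; rewrite coef_sum big1 // => i _; apply: h. Qed.

Lemma vanish_belowX q k : vanish_below 1 q -> vanish_below k (q ^+ k).
Proof.
move=> hq; elim: k => [|k IH]; first by [].
by rewrite exprS -add1n; apply: vanish_belowM.
Qed.

Lemma vanish_below_comp N p q :
  vanish_below N p -> vanish_below 1 q -> vanish_below N (p \Po q).
Proof.
move=> hp hq; rewrite comp_polyE; apply: vanish_below_sum => i n hn.
have [hi|hi] := ltnP i N; first by rewrite hp // scale0r coef0.
by rewrite coefZ (vanish_belowW hi (vanish_belowX (k:=i) hq)) ?mulr0.
Qed.

Lemma congX_refl N p : congX N p p.
Proof. by move=> n _; rewrite subrr coef0. Qed.

Lemma congX_sym N p q : congX N p q -> congX N q p.
Proof. by move=> h n hn; rewrite -opprB coefN h ?oppr0. Qed.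

Lemma congX_trans N p q r : congX N p q -> congX N q r -> congX N p r.
Proof. by move=> h1 h2; rewrite /congX -(subrKA q); apply: vanish_belowD. Qed.

Lemma congX_coef N p q n : congX N p q -> (n < N)%N -> p`_n = q`_n.
Proof. by move=> h hn; apply/eqP; rewrite -subr_eq0 -coefB h. Qed.

Lemma congXM N p p' q q' :
  congX N p p' -> congX N q q' -> congX N (p * q) (p' * q').
Proof.
move=> h1 h2; rewrite /congX.
have -> : p * q - p' * q' = (p - p') * q + p' * (q - q') by ring.
apply: vanish_belowD; first by rewrite -[N]addn0; apply: vanish_belowM.
by rewrite -[N]add0n; apply: vanish_belowM.
Qed.

Lemma congX_comp N p p' q :
  congX N p p' -> vanish_below 1 q -> congX N (p \Po q) (p' \Po q).
Proof. by move=> h hq; rewrite /congX -comp_polyB; apply: vanish_below_comp. Qed.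

End Valuation.

Section FpsAlgebra.
Variable R : realFieldType.
Implicit Types (f g h a b L : fps R) (c : R) (N : nat).

Definition fps_trunc N f : {poly R} := \poly_(i < N) f i.

Lemma coef_trunc N f n : (n < N)%N -> (fps_trunc N f)`_n = f n.
Proof. by move=> hn; rewrite coef_poly hn. Qed.

Lemma congX_trunc N f (p : {poly R}) :
  (forall n, (n < N)%N -> f n = p`_n) -> congX N (fps_trunc N f) p.
Proof. by move=> h n hn; rewrite coefB coef_trunc // h // subrr. Qed.

Lemma trunc_vanish N f : f 0%N = 0 -> vanish_below 1 (fps_trunc N f).
Proof. by move=> h0 [|//] _; rewrite coef_poly; case: ifP. Qed.

Lemma coef_fps_mul_trunc N f g n :
  (n < N)%N -> fps_mul f g n = (fps_trunc N f * fps_trunc N g)`_n.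
Proof.
move=> hn; rewrite coefM; apply: eq_bigr => -[i /= hi] _.
by rewrite !coef_trunc //; lia.
Qed.

Lemma trunc_mul N f g :
  congX N (fps_trunc N (fps_mul f g)) (fps_trunc N f * fps_trunc N g).
Proof. by apply: congX_trunc => n hn; apply: coef_fps_mul_trunc. Qed.

Lemma trunc_pow N f k : congX N (fps_trunc N (fps_pow f k)) (fps_trunc N f ^+ k).
Proof.
elim: k => [|k IH].
  by apply: congX_trunc => -[|n] _; rewrite expr0 coefC.
rewrite exprS; apply: congX_trans (trunc_mul f (fps_pow f k)) _.
exact: congXM (congX_refl _) IH.
Qed.

(* The n-th coefficient of a composition is that of the composed truncations:
   terms a_i L^i with i > n do not contribute since L(0) = 0. *)
Lemma coef_fps_comp_trunc N a f n : f 0%N = 0 -> (n < N)%N ->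
  fps_comp a f n = (fps_trunc N a \Po fps_trunc N f)`_n.
Proof.
move=> f0 hn.
have -> : fps_trunc N a \Po fps_trunc N f = \sum_(i < N) a i *: fps_trunc N f ^+ i.
  rewrite [fps_trunc N a]poly_def raddf_sum; apply: eq_bigr => i _.
  by rewrite /= comp_polyZ rmorphXn /= comp_polyX.
rewrite coef_sum /fps_comp (big_ord_widen _ (fun i => a i * fps_pow f i n) hn).
rewrite big_mkcond; apply: eq_bigr => i _; rewrite coefZ.
case: ifP => hi; first by rewrite -(congX_coef (trunc_pow (N:=N) f i) hn) coef_trunc.
by rewrite (vanish_belowX (k:=i) (trunc_vanish N f0)) ?mulr0 // ltnNge -ltnS hi.
Qed.

Lemma fps_comp_mul a b L : L 0%N = 0 ->
  fps_comp (fps_mul a b) L = fps_mul (fps_comp a L) (fps_comp b L).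
Proof.
move=> L0; apply: functional_extensionality => n; have hn : (n < n.+1)%N by [].
rewrite (coef_fps_comp_trunc _ L0 hn) (coef_fps_mul_trunc _ _ hn).
apply: congX_coef hn.
apply: congX_trans (congX_comp (trunc_mul a b) (trunc_vanish _ L0)) _.
rewrite comp_polyM; apply: congX_sym.
by apply: congXM; apply: congX_trunc => m hm; apply: coef_fps_comp_trunc.
Qed.

Lemma fps_mulC f g : fps_mul f g = fps_mul g f.
Proof.
apply: functional_extensionality => n.
by rewrite !(@coef_fps_mul_trunc n.+1) // mulrC.
Qed.

Lemma fps_mulA f g h : fps_mul (fps_mul f g) h = fps_mul f (fps_mul g h).
Proof.
apply: functional_extensionality => n; have hn : (n < n.+1)%N by [].
rewrite !(coef_fps_mul_trunc _ _ hn).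
rewrite (congX_coef (congXM (trunc_mul f g) (congX_refl (fps_trunc _ h))) hn).
by rewrite (congX_coef (congXM (congX_refl (fps_trunc _ f)) (trunc_mul g h)) hn) mulrA.
Qed.

Lemma fps_mul1 f : fps_mul f (fps_one R) = f.
Proof.
apply: functional_extensionality => n; have hn : (n < n.+1)%N by [].
have trunc1 : fps_trunc n.+1 (fps_one R) = 1.
  by apply/polyP => -[|i]; rewrite coef_poly coefC //=; case: ifP.
by rewrite (coef_fps_mul_trunc _ _ hn) trunc1 mulr1 coef_trunc.
Qed.

Lemma fps_mul1l f : fps_mul (fps_one R) f = f.
Proof. by rewrite fps_mulC fps_mul1. Qed.

Lemma fps_mul_coef0 f g : fps_mul f g 0%N = f 0%N * g 0%N.
Proof. by rewrite /fps_mul big_ord1. Qed.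

Lemma size_fps_inv_aux f n : size (fps_inv_aux f n) = n.+1.
Proof. by elim: n => [|n IH] //=; rewrite size_rcons IH. Qed.

Lemma nth_fps_inv_aux f n i :
  (i <= n)%N -> nth 0 (fps_inv_aux f n) i = fps_inv f i.
Proof.
elim: n => [|n IH] hi; first by move: hi; rewrite leqn0 => /eqP ->.
have [hlt|hgt|->] // := ltngtP i n.+1; first by rewrite /= nth_rcons size_fps_inv_aux hlt IH.
by move: hgt; rewrite ltnNge hi.
Qed.

Lemma fps_invS f n : fps_inv f n.+1 =
  - (f 0%N)^-1 * \sum_(i < n.+1) f i.+1 * fps_inv f (n - i)%N.
Proof.
rewrite {1}/fps_inv /= nth_rcons size_fps_inv_aux ltnn eqxx; congr (_ * _).
by apply: eq_bigr => i _; rewrite nth_fps_inv_aux // leq_subr.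
Qed.

Lemma fps_mulV f : f 0%N != 0 -> fps_mul f (fps_inv f) = fps_one R.
Proof.
move=> f0; apply: functional_extensionality => -[|n].
  by rewrite fps_mul_coef0 mulfV.
rewrite /fps_mul big_ord_recl subn0 fps_invS mulrA mulrN mulfV // mulN1r.
by under [X in _ + X]eq_bigr => i _ do rewrite lift0 subSS; rewrite addNr.
Qed.

(* Uniqueness of inverses, the tool for all identities about fps_inv. *)
Lemma fps_inv_unique f g : f 0%N != 0 -> fps_mul f g = fps_one R -> g = fps_inv f.
Proof.
move=> f0 fg; rewrite -[g]fps_mul1 -(fps_mulV f0) -fps_mulA (fps_mulC g) fg.
exact: fps_mul1l.
Qed.

Lemma fps_invM f g : f 0%N != 0 -> g 0%N != 0 ->
  fps_inv (fps_mul f g) = fps_mul (fps_inv f) (fps_inv g).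
Proof.
move=> f0 g0; apply/esym/fps_inv_unique; first by rewrite fps_mul_coef0 mulf_neq0.
rewrite fps_mulA -(fps_mulA g) (fps_mulC g) fps_mulA -fps_mulA.
by rewrite !fps_mulV // fps_mul1.
Qed.

Definition fps_dil c f : fps R := fun n => c ^+ n * f n.

Lemma fps_dil_mul c f g : fps_dil c (fps_mul f g) = fps_mul (fps_dil c f) (fps_dil c g).
Proof.
apply: functional_extensionality => n; rewrite /fps_dil /fps_mul mulr_sumr.
apply: eq_bigr => -[i /= hi] _.
by rewrite -{1}(subnKC (_ : (i <= n)%N)) // exprD; ring.
Qed.

Lemma fps_dil_one c : fps_dil c (fps_one R) = fps_one R.
Proof.
by apply: functional_extensionality => -[|n]; rewrite /fps_dil /fps_one /= ?mulr0 ?mulr1.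
Qed.

Lemma fps_dil_inv c f : f 0%N != 0 -> fps_dil c (fps_inv f) = fps_inv (fps_dil c f).
Proof.
move=> f0; apply: fps_inv_unique; first by rewrite /fps_dil expr0 mul1r.
by rewrite -fps_dil_mul fps_mulV // fps_dil_one.
Qed.

Lemma fps_dil_pow c f k : fps_pow (fps_dil c f) k = fps_dil c (fps_pow f k).
Proof.
elim: k => [|k IH]; first exact: esym (fps_dil_one c).
by rewrite /fps_pow /= -/(fps_pow _ k) IH fps_dil_mul.
Qed.

Lemma fps_dil_sub c f g : fps_dil c (fps_sub f g) = fps_sub (fps_dil c f) (fps_dil c g).
Proof. by apply: functional_extensionality => n; rewrite /fps_dil /fps_sub mulrBr. Qed.

Lemma fps_divt_dil c f : fps_divt (fps_dil c f) = fps_scale c (fps_dil c (fps_divt f)).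
Proof.
by apply: functional_extensionality => n; rewrite /fps_dil /fps_scale /fps_divt exprS mulrA.
Qed.

Lemma fps_scale_mull c f g : fps_mul (fps_scale c f) g = fps_scale c (fps_mul f g).
Proof.
apply: functional_extensionality => n; rewrite /fps_scale /fps_mul mulr_sumr.
by apply: eq_bigr => i _; rewrite mulrA.
Qed.

Lemma fps_scale_mulr c f g : fps_mul f (fps_scale c g) = fps_scale c (fps_mul f g).
Proof. by rewrite fps_mulC fps_scale_mull fps_mulC. Qed.

Lemma fps_scale_pow c f k : fps_pow (fps_scale c f) k = fps_scale (c ^+ k) (fps_pow f k).
Proof.
elim: k => [|k IH].
  by apply: functional_extensionality => n; rewrite /fps_scale /fps_pow /= mul1r.
rewrite /fps_pow /= -!/(fps_pow _ k) IH fps_scale_mull fps_scale_mulr.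
by apply: functional_extensionality => n; rewrite /fps_scale exprS mulrA.
Qed.

Lemma fps_comp_scale_inner a c L :
  fps_comp a (fps_scale c L) = fps_comp (fun k => a k * c ^+ k) L.
Proof.
apply: functional_extensionality => n; apply: eq_bigr => i _.
by rewrite fps_scale_pow /fps_scale mulrA.
Qed.

Lemma fps_comp_scale_outer a c L :
  fps_comp (fps_scale c a) L = fps_scale c (fps_comp a L).
Proof.
apply: functional_extensionality => n; rewrite /fps_comp /fps_scale mulr_sumr.
by apply: eq_bigr => i _; rewrite mulrA.
Qed.

Lemma fps_comp_sub a b L :
  fps_comp (fps_sub a b) L = fps_sub (fps_comp a L) (fps_comp b L).
Proof.
apply: functional_extensionality => n; rewrite /fps_comp /fps_sub -sumrB.
by apply: eq_bigr => i _; rewrite mulrBl.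
Qed.

Lemma fps_comp_coef0 a L : fps_comp a L 0%N = a 0%N.
Proof. by rewrite /fps_comp big_ord1 /fps_pow /= /fps_one /= mulr1. Qed.

Lemma fps_comp_one L : fps_comp (fps_one R) L = fps_one R.
Proof.
apply: functional_extensionality => n; rewrite /fps_comp big_ord_recl big1.
  by rewrite addr0 /fps_one /= mul1r.
by move=> i _; rewrite /fps_one /= mul0r.
Qed.

Lemma fps_comp_inv a L : L 0%N = 0 -> a 0%N != 0 ->
  fps_comp (fps_inv a) L = fps_inv (fps_comp a L).
Proof.
move=> L0 a0; apply: fps_inv_unique; first by rewrite fps_comp_coef0.
by rewrite -fps_comp_mul // fps_mulV // fps_comp_one.
Qed.

Definition fps_X : fps R := fun n => (n == 1%N)%:R.

Lemma fps_comp_X L : L 0%N = 0 -> fps_comp fps_X L = L.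
Proof.
move=> L0; apply: functional_extensionality => -[|n].
  by rewrite fps_comp_coef0 L0.
rewrite /fps_comp big_ord_recl big_ord_recl big1 => [|i _]; last by rewrite mul0r.
by rewrite /fps_X /= mul0r add0r mul1r addr0 -[in RHS](fps_mul1 L).
Qed.

Lemma fps_mulX_divt f : f 0%N = 0 -> f = fps_mul fps_X (fps_divt f).
Proof.
move=> f0; apply: functional_extensionality => -[|n].
  by rewrite fps_mul_coef0 f0 mul0r.
rewrite /fps_mul big_ord_recl big_ord_recl big1 => [|i _]; last by rewrite mul0r.
by rewrite /fps_X /= mul0r add0r mul1r addr0 /fps_divt subn1.
Qed.

Lemma fps_divt_mul f g : f 0%N = 0 ->
  fps_divt (fps_mul f g) = fps_mul (fps_divt f) g.
Proof.
move=> f0; apply: functional_extensionality => n.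
by rewrite /fps_divt /fps_mul big_ord_recl f0 mul0r add0r.
Qed.

Lemma fps_divt_comp a L : a 0%N = 0 -> L 0%N = 0 ->
  fps_divt (fps_comp a L) = fps_mul (fps_divt L) (fps_comp (fps_divt a) L).
Proof.
move=> a0 L0.
by rewrite {1}(fps_mulX_divt a0) fps_comp_mul // fps_comp_X // fps_divt_mul.
Qed.

Lemma fps_mul_egf f g k : k`!%:R * fps_mul f g k =
  \sum_(i < k.+1) 'C(k, i)%:R * (i`!%:R * f i) * ((k - i)`!%:R * g (k - i)%N).
Proof.
rewrite mulr_sumr; apply: eq_bigr => -[i /= hi] _.
by rewrite -(bin_fact (_ : i <= k)%N) // !natrM; ring.
Qed.

End FpsAlgebra.

Section ParitySums.
Variable V : nmodType.
Implicit Type F : nat -> V.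

Lemma sum_even_terms F k :
  \sum_(i < k.+1) (if odd i then 0 else F i) = \sum_(l < k./2.+1) F (2 * l)%N.
Proof.
elim: k => [|k IH]; first by rewrite !big_ord1.
rewrite big_ord_recr /= IH uphalf_half.
have := odd_double_half k; case: (odd k) => /= k_eq; last by rewrite addr0.
by rewrite add1n [RHS]big_ord_recr /=; congr (_ + F _); lia.
Qed.

Lemma sum_odd_terms F k :
  \sum_(i < k.+1) (if odd i then F i else 0) = \sum_(l < k.+1./2) F (2 * l).+1.
Proof.
elim: k => [|k IH]; first by rewrite big_ord1 big_ord0.
rewrite big_ord_recr IH /= uphalf_half.
have := odd_double_half k; case: (odd k) => /= k_eq; first by rewrite addr0.
by rewrite [RHS]big_ord_recr /=; congr (_ + F _); lia.
Qed.

End ParitySums.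

Lemma fact_neq0 (R : numDomainType) n : (n`!%:R : R) != 0.
Proof. by rewrite pnatr_eq0 -lt0n fact_gt0. Qed.

(* The degenerate series, written in terms of u = log(1 + lam t) / lam.
   V = log(1 + lam t), L1 = log(1 + t), W = t / log(1 + t) (the generating
   function of b_n), and E = t / (e^(t/2) - e^(-t/2)). *)
Section DegenerateSeries.
Variables (R : realFieldType) (lam : R).
Hypothesis lam_neq0 : lam != 0.

Local Notation V := (log1p lam).
Local Notation L1 := (log1p (1 : R)).
Local Notation W := (fps_inv (fps_divt L1)).
Local Notation D := (fps_sub (oexp (2^-1 : R)) (oexp (- 2^-1))).
Local Notation E := (fps_inv (fps_divt D)).

Definition cos_series (y : R) : fps R := fun k => cos_coef R k * y ^+ k.
Definition sin_series (y : R) : fps R := fun k => sin_coef R k * y ^+ k.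

Lemma log1p_dil : V = fps_dil lam L1.
Proof.
apply: functional_extensionality => -[|n]; rewrite /fps_dil /log1p ?mulr0 //.
by rewrite expr1n; ring.
Qed.

Lemma fps_comp_log1p_scale (a : fps R) (z : R) :
  fps_comp a (fps_scale (z / lam) V) =
  fps_comp (fps_dil lam^-1 (fun k => a k * z ^+ k)) V.
Proof.
rewrite fps_comp_scale_inner; congr fps_comp; apply: functional_extensionality => k.
by rewrite /fps_dil exprMn; ring.
Qed.

Lemma dexpE z : dexp lam z = fps_comp (fps_dil lam^-1 (oexp z)) V.
Proof.
rewrite /dexp fps_comp_log1p_scale; congr (fps_comp (fps_dil _ _) _).
by apply: functional_extensionality => k; rewrite /exp_coef /oexp mulrC.
Qed.

Lemma dcosE z : dcos lam z = fps_comp (fps_dil lam^-1 (cos_series z)) V.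
Proof. exact: fps_comp_log1p_scale. Qed.

Lemma dsinE z : dsin lam z = fps_comp (fps_dil lam^-1 (sin_series z)) V.
Proof. exact: fps_comp_log1p_scale. Qed.

Lemma divt_D0 : fps_divt D 0%N = 1.
Proof.
rewrite /fps_divt /fps_sub /oexp /= !expr1 (_ : 1`!%:R = 1 :> R) // !divr1 opprK.
lra.
Qed.

Lemma divt_L1_0 : fps_divt L1 0%N = 1.
Proof. by rewrite /fps_divt /log1p /= expr0 expr1 mul1r divr1. Qed.

Lemma divt_V : fps_scale lam^-1 (fps_divt V) = fps_dil lam (fps_divt L1).
Proof.
apply: functional_extensionality => n.
by rewrite log1p_dil /fps_scale /fps_divt /fps_dil exprS !mulrA mulVf // mul1r.
Qed.

Lemma dfactorE : dfactor lam = fps_mul (fps_dil lam W) (fps_comp (fps_dil lam^-1 E) V).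
Proof.
have D0 : fps_dil lam^-1 D 0%N = 0 by rewrite /fps_dil /fps_sub /oexp !expr0 subrr mulr0.
have divtD0 : fps_divt D 0%N != 0 by rewrite divt_D0 oner_neq0.
have divtL0 : fps_divt L1 0%N != 0 by rewrite divt_L1_0 oner_neq0.
rewrite /dfactor !dexpE -fps_comp_sub -fps_dil_sub fps_divt_comp //.
rewrite fps_divt_dil fps_comp_scale_outer fps_scale_mulr -fps_scale_mull divt_V.
rewrite fps_invM ?fps_comp_coef0 ?fps_dil_inv ?fps_comp_inv //;
  by rewrite /fps_dil expr0 mul1r.
Qed.

Lemma degenerate_gf_factor x (G : fps R) :
  fps_mul (fps_mul (dfactor lam) (dexp lam x)) (fps_comp (fps_dil lam^-1 G) V) =
  fps_mul (fps_comp (fps_dil lam^-1 (fps_mul (fps_mul E (oexp x)) G)) V)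
          (fps_dil lam W).
Proof.
rewrite dfactorE dexpE !fps_dil_mul !fps_comp_mul //.
by rewrite [RHS]fps_mulC !fps_mulA.
Qed.

(* Coefficients of G(u): u^k / k! = lam^(-k) sum_m S1(m,k) lam^m t^m / m!. *)
Lemma coef_comp_log1p (G : fps R) m :
  m`!%:R * fps_comp (fps_dil lam^-1 G) V m =
  \sum_(k < m.+1) lam ^+ (m - k) * S1 R m k * (k`!%:R * G k).
Proof.
rewrite mulr_sumr; apply: eq_bigr => -[k /= hk] _.
rewrite log1p_dil fps_dil_pow /fps_dil /S1 expfB_cond ?(negPf lam_neq0) //.
by rewrite exprVn; field; rewrite fact_neq0 expf_neq0.
Qed.

Lemma coef_degenerate_gf x (G : fps R) n :
  n`!%:R * fps_mul (fps_mul (dfactor lam) (dexp lam x))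
                   (fps_comp (fps_dil lam^-1 G) V) n =
  \sum_(m < n.+1) \sum_(k < m.+1) 'C(n, m)%:R * lam ^+ (n - k) * S1 R m k
     * bsec R (n - m) * (k`!%:R * fps_mul (fps_mul E (oexp x)) G k).
Proof.
rewrite degenerate_gf_factor fps_mul_egf; apply: eq_bigr => -[m /= hm] _.
rewrite coef_comp_log1p mulr_sumr mulr_suml; apply: eq_bigr => -[k /= hk] _.
have -> : lam ^+ (n - k) = lam ^+ (m - k) * lam ^+ (n - m).
  by rewrite -exprD; congr (_ ^+ _); lia.
by rewrite /fps_dil /bsec; ring.
Qed.

Lemma coef_B2_cos x y k :
  k`!%:R * fps_mul (fps_mul E (oexp x)) (cos_series y) k =
  \sum_(l < k./2.+1) 'C(k, 2 * l)%:R * (-1) ^+ l * B2 (k - 2 * l) x * y ^+ (2 * l).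
Proof.
pose F i := 'C(k, i)%:R * (-1) ^+ i./2 * B2 (k - i) x * y ^+ i.
rewrite fps_mulC fps_mul_egf (eq_bigr (fun i : 'I__ => if odd i then 0 else F i)).
  by rewrite sum_even_terms; apply: eq_bigr => l _; rewrite /F mul2n doubleK.
move=> i _; rewrite /cos_series /cos_coef /F /B2.
by case: (odd i); [rewrite !(mul0r, mulr0) | field; rewrite fact_neq0].
Qed.

Lemma coef_B2_sin x y k :
  k`!%:R * fps_mul (fps_mul E (oexp x)) (sin_series y) k =
  \sum_(l < k.+1./2) 'C(k, (2 * l).+1)%:R * (-1) ^+ l * B2 (k - (2 * l).+1) x
                     * y ^+ (2 * l).+1.
Proof.
pose F i := 'C(k, i)%:R * (-1) ^+ i./2 * B2 (k - i) x * y ^+ i.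
rewrite fps_mulC fps_mul_egf (eq_bigr (fun i : 'I__ => if odd i then F i else 0)).
  by rewrite sum_odd_terms; apply: eq_bigr => l _; rewrite /F mul2n /= uphalf_double.
move=> i _; rewrite /sin_series /sin_coef /F /B2.
by case: (odd i); [field; rewrite fact_neq0 | rewrite !(mul0r, mulr0)].
Qed.

End DegenerateSeries.

Theorem theorem2p6 (R : realFieldType) (lam x y : R) (hlam : lam != 0) :
  (forall n : nat,
    Bc lam x y n =
    \sum_(m < n.+1) \sum_(k < m.+1) \sum_(l < k./2.+1)
      'C(n, m)%:R * 'C(k, 2 * l)%:R * (-1) ^+ l * lam ^+ (n - k)
      * S1 R m k * bsec R (n - m) * B2 (k - 2 * l) x * y ^+ (2 * l))
  /\
  (forall n : nat, (1 <= n)%N ->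
    Bs lam x y n =
    \sum_(m < n.+1) \sum_(k < m.+1) \sum_(l < k.+1./2)
      'C(n, m)%:R * 'C(k, (2 * l).+1)%:R * (-1) ^+ l * lam ^+ (n - k)
      * S1 R m k * bsec R (n - m) * B2 (k - (2 * l).+1) x * y ^+ (2 * l).+1).
Proof.
split=> [n | n _].
- rewrite /Bc dcosE (coef_degenerate_gf hlam); apply: eq_bigr => m _.
  apply: eq_bigr => k _; rewrite coef_B2_cos mulr_sumr.
  by apply: eq_bigr => l _; ring.
- rewrite /Bs dsinE (coef_degenerate_gf hlam); apply: eq_bigr => m _.
  apply: eq_bigr => k _; rewrite coef_B2_sin mulr_sumr.
  by apply: eq_bigr => l _; ring.
Qed.
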